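(* Let $d \geq 3$ and let $C \subset \mathbb{R}^d$ be a smooth $d$-dimensional combinatorial cube with faces labeled $F_I^J$ via a fixed face-poset isomorphism with $[0,1]^d$. Suppose that every smooth combinatorial cube of dimension smaller than $d$ has two parallel facets. Fix $x,y \in \{1,\dots,d\}$ with $x\neq y$, and suppose that the four $(d-2)$-dimensional faces $F_{xy}, F_{x\bar y}, F_{\bar x y}, F_{\bar x\bar y}$ are all parallel to one another. Then either $F_x$ and $F_{\bar x}$ are parallel, or $F_y$ and $F_{\bar y}$ are parallel.
   Context: A lattice polytope is the convex hull of finitely many points of $\mathbb{Z}^n$. An $n$-dimensional polytope is simple if each vertex lies in exactly $n$ edges; the primitive edge directions at a vertex are the smallest lattice vectors along its incident edges; an $n$-dimensional lattice polytope in $\mathbb{R}^n$ is smooth if it is simple and at every vertex the primitive edge directions form a basis of $\mathbb{Z}^n$. An $n$-dimensional combinatorial cube is a polytope whose face poset is isomorphic to that of $[0,1]^n$. For disjoint $I,J \subseteq \{1,\dots,d\}$ the face of $[0,1]^d$ given by $x_k=0$ for $k\in I$ and $x_k = 1$ for $k \in J$ is denoted $F_I^J$, and the corresponding face of $C$ is also denoted $F_I^J$. Elements of $J$ are written with a bar and elements of $I$ without, e.g. $F_{x\bar y} = F_{\{x\}}^{\{y\}}$, $F_{\bar x} = F_\emptyset^{\{x\}}$, $F_x = F_{\{x\}}^\emptyset$. Two faces $F,G$ are parallel if $\mathrm{lin}(F)=\mathrm{lin}(G)$, where $\mathrm{lin}(F)$ is the linear subspace parallel to the affine hull of $F$. 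*)

From HB Require Import structures.
From mathcomp Require Import all_boot all_order all_algebra.
From mathcomp Require Import boolp classical_sets reals.
Set Implicit Arguments. Unset Strict Implicit. Unset Printing Implicit Defensive.
Import Order.TTheory GRing.Theory Num.Theory.
Local Open Scope ring_scope.
Local Open Scope classical_set_scope.

Section Polytopes.
Variables (R : realType) (d : nat).
Implicit Types (P F G E : set 'rV[R]_d) (u v w : 'rV[R]_d).

Definition dotv (a x : 'rV[R]_d) : R := \sum_(i < d) a 0 i * x 0 i.

Definition int_vec u : Prop := forall i, u 0 i \is a Num.int.

Definition conv (s : seq 'rV[R]_d) : set 'rV[R]_d :=
  [set x | exists c : 'I_(size s) -> R,
     (forall i, 0 <= c i) /\ \sum_i c i = 1 /\
     x = \sum_(i < size s) c i *: s`_i].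

Definition lattice_polytope P : Prop :=
  exists s : seq 'rV[R]_d, (forall v, v \in s -> int_vec v) /\ P = conv s.

(* F is a face of P: intersection of P with a supporting hyperplane
   (a = 0 allowed, giving P itself and the empty face) *)
Definition face P F : Prop :=
  exists (a : 'rV[R]_d) (b : R),
    (forall x, P x -> dotv a x <= b) /\ F = P `&` [set x | dotv a x = b].

Definition full_dim P : Prop :=
  forall (a : 'rV[R]_d) (b : R), (forall x, P x -> dotv a x = b) -> a = 0.

Definition vertex P v : Prop := face P [set v].

Definition edge P E : Prop :=
  face P E /\ exists v w, v <> w /\ E = conv [:: v; w].

(* u is the primitive edge direction of the edge E at its endpoint v:
   the smallest lattice vector along E pointing away from v *)
Definition prim_dir v E u : Prop :=
  exists w, w <> v /\ E = conv [:: v; w] /\ int_vec u /\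
    exists t : R, 0 < t /\ u = t *: (w - v) /\
      (forall s : R, 0 < s -> int_vec (s *: (w - v)) -> t <= s).

Definition Zbasis (M : 'M[R]_d) : Prop :=
  forall z : 'rV[R]_d, int_vec z ->
    exists c : 'rV[R]_d, int_vec c /\ z = c *m M /\
      (forall c', int_vec c' -> z = c' *m M -> c' = c).

(* smooth d-dimensional lattice polytope in R^d: simple (each vertex on
   exactly d edges, enumerated bijectively by e) and the primitive edge
   directions at each vertex form a basis of Z^d *)
Definition smooth P : Prop :=
  lattice_polytope P /\ full_dim P /\
  forall v, vertex P v ->
    exists (e : 'I_d -> set 'rV[R]_d) (M : 'M[R]_d),
      injective e /\
      (forall i, edge P (e i) /\ e i v /\ prim_dir v (e i) (row i M)) /\
      (forall E, edge P E -> E v -> exists i, E = e i) /\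
      Zbasis M.

(* L labels the faces of P via a face-poset isomorphism with [0,1]^d:
   L I J is the face corresponding to F_I^J = {x_k = 0 (k in I), x_k = 1 (k in J)},
   for disjoint I, J; the empty face corresponds to the empty face. *)
Definition cube_labeling P (L : {set 'I_d} -> {set 'I_d} -> set 'rV[R]_d) : Prop :=
  (forall I J : {set 'I_d}, [disjoint I & J]%bool -> face P (L I J) /\ L I J !=set0) /\
  (forall F, face P F -> F !=set0 ->
     exists I J : {set 'I_d}, [disjoint I & J]%bool /\ F = L I J) /\
  (forall I J I' J' : {set 'I_d}, [disjoint I & J]%bool -> [disjoint I' & J']%bool ->
     (L I J `<=` L I' J' <-> (I' \subset I) /\ (J' \subset J))).

Definition comb_cube P : Prop := exists L, cube_labeling P L.

Definition facet P F : Prop :=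
  face P F /\ F <> P /\ F !=set0 /\
  (forall G, face P G -> F `<=` G -> G = F \/ G = P).

Definition lin F : set 'rV[R]_d :=
  [set v | exists (n : nat) (c : 'I_n -> R) (p q : 'I_n -> 'rV[R]_d),
     (forall i, F (p i) /\ F (q i)) /\ v = \sum_(i < n) c i *: (p i - q i)].

Definition parallel F G : Prop := lin F = lin G.

End Polytopes.

From HB Require Import structures.
From mathcomp Require Import all_boot all_order all_algebra.
From mathcomp Require Import boolp classical_sets reals.
From mathcomp Require Import ring lra.
Set Implicit Arguments. Unset Strict Implicit. Unset Printing Implicit Defensive.
Import Order.TTheory GRing.Theory Num.Theory.
Local Open Scope ring_scope.
Local Open Scope classical_set_scope.

(* Take coordinates X, Y, ... with respect to the primitive edge directions at
   the vertex v1 = F_{[d]} (all coordinates 0), X and Y along the edges flipping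
   x and y, and let v2, v3, v4 be the other vertices of the 2-face spanned by
   these two edges (v2 flips x, v3 flips y, v4 flips both).  At v2, v3 and v4
   the remaining edges lie in a face parallel to F_xy, so their directions lie
   in lin F_xy = {X = Y = 0}.  Unimodularity at v2 and v3 then forces the edge
   directions from v2 and v3 towards v4 to be p = (p1, 1) and q = (1, q2) in
   the (X, Y) plane (the signs come from the facets F_y and F_x), and
   unimodularity at v4 gives |1 - p1 q2| = 1.  Since the facet F_{\bar x}
   separates v3 from v4, 1 - p1 q2 > 0, hence p1 q2 = 0.  As lin F_x = {X = 0}
   and lin F_{\bar x} = {X = p1 Y} (symmetrically for y), p1 = 0 or q2 = 0
   gives the two alternatives. *)

Section Unimodular.
Variables (R : realType) (n : nat).

Definition int_mx m p (A : 'M[R]_(m, p)) := forall i j, A i j \is a Num.int.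

Definition unimodular (M : 'M[R]_n) :=
  [/\ M \in unitmx, int_mx M & int_mx (invmx M)].

Lemma int_mxM m p q (A : 'M[R]_(m, p)) (B : 'M[R]_(p, q)) :
  int_mx A -> int_mx B -> int_mx (A *m B).
Proof. by move=> iA iB i j; rewrite mxE rpred_sum // => k _; apply: rpredM. Qed.

Lemma unimodular_left_inv (M N : 'M[R]_n) :
  N *m M = 1%:M -> int_mx M -> int_mx N -> unimodular M.
Proof.
move=> NM iM iN; have [_ uM] := mulmx1_unit NM.
rewrite /unimodular; suff -> : invmx M = N by split.
by rewrite -[N]mulmx1 -(mulmxV uM) mulmxA NM mul1mx.
Qed.

Lemma unimodular_rowsub (g : 'I_n -> 'I_n) (M : 'M[R]_n) :
  injective g -> unimodular M -> unimodular (rowsub g M).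
Proof.
move=> ig [uM iM iN]; apply: (@unimodular_left_inv _ (colsub g (invmx M))).
- apply/matrixP => i j; rewrite -(mulVmx uM) !mxE.
  by rewrite [RHS](reindex_inj ig); apply: eq_bigr => k _; rewrite !mxE.
- by move=> i j; rewrite mxE.
- by move=> i j; rewrite mxE.
Qed.

Lemma coord_row (M : 'M[R]_n) j k :
  M \in unitmx -> (row j M *m invmx M) 0 k = (j == k)%:R.
Proof. by move=> uM; rewrite -row_mul mulmxV // row1 mxE eqxx eq_sym. Qed.

Lemma norm_intM_eq1 (a b : R) :
  a \is a Num.int -> b \is a Num.int -> `|a * b| = 1 -> `|b| = 1.
Proof.
move=> ai bi ab.
have a0 : a != 0.
  by apply/eqP => a0; move: ab; rewrite a0 mul0r normr0 => /eqP; rewrite eq_sym oner_eq0.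
have b0 : b != 0.
  by apply/eqP => b0; move: ab; rewrite b0 mulr0 normr0 => /eqP; rewrite eq_sym oner_eq0.
have ha := norm_intr_ge1 ai a0; have hb := norm_intr_ge1 bi b0.
apply/eqP; rewrite eq_le hb andbT -ab normrM ler_peMl // (le_trans ler01 ha).
Qed.

(* The 2x2 blocks of K and of its integer inverse multiply to the identity. *)
Lemma unimodular_minor (M N : 'M[R]_n) (i1 i2 j1 j2 : 'I_n) :
  unimodular M -> unimodular N -> i1 != i2 -> j1 != j2 ->
  (forall j, j != j1 -> j != j2 ->
     (N *m invmx M) j i1 = 0 /\ (N *m invmx M) j i2 = 0) ->
  let K := N *m invmx M in
  `|K j1 i1 * K j2 i2 - K j1 i2 * K j2 i1| = 1.
Proof.
move=> [uM iM iMV] [uN iN iNV] i12 j12 K0 K.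
pose K' := M *m invmx N.
have KK i i' : (forall j, j != j1 -> j != j2 -> K j i' = 0) ->
    K' i j1 * K j1 i' + K' i j2 * K j2 i' = (i == i')%:R.
  move=> Ki'; have -> : (i == i')%:R = (K' *m K) i i'.
    by rewrite mulmxA mulmxKV // mulmxV // mxE.
  rewrite [RHS]mxE (bigD1 j1) // (bigD1 j2) 1?eq_sym //= big1 ?addr0 //.
  by move=> j /andP [jj2 jj1]; rewrite Ki' ?mulr0.
have K1 j : j != j1 -> j != j2 -> K j i1 = 0 by move=> /K0 h /h [].
have K2 j : j != j1 -> j != j2 -> K j i2 = 0 by move=> /K0 h /h [].
have := KK i1 i1 K1; have := KK i1 i2 K2; have := KK i2 i1 K1; have := KK i2 i2 K2.
rewrite !eqxx (negPf i12) eq_sym (negPf i12) => E22 E21 E12 E11.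
have iK : int_mx K by apply: int_mxM.
have iK' : int_mx K' by apply: int_mxM.
apply: (@norm_intM_eq1 (K' i1 j1 * K' i2 j2 - K' i1 j2 * K' i2 j1)).
- by rewrite rpredB ?rpredM.
- by rewrite rpredB ?rpredM.
rewrite (_ : _ * _ = 1) ?normr1 //.
transitivity ((K' i1 j1 * K j1 i1 + K' i1 j2 * K j2 i1) *
              (K' i2 j1 * K j1 i2 + K' i2 j2 * K j2 i2) -
              (K' i1 j1 * K j1 i2 + K' i1 j2 * K j2 i2) *
              (K' i2 j1 * K j1 i1 + K' i2 j2 * K j2 i1)); first ring.
by rewrite E11 E12 E21 E22 mulr1 mul0r subr0.
Qed.

End Unimodular.

Section Hyperplanes.
Variables (R : realType) (d : nat).
Local Notation V := 'rV[R]_d.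
Implicit Types (a u v w z : V) (s : seq V) (F P : set V).

Lemma dotvD a u v : dotv a (u + v) = dotv a u + dotv a v.
Proof. by rewrite /dotv -big_split; apply: eq_bigr => i _; rewrite mxE mulrDr. Qed.

Lemma dotvZ a u c : dotv a (c *: u) = c * dotv a u.
Proof. by rewrite /dotv mulr_sumr; apply: eq_bigr => i _; rewrite mxE mulrCA. Qed.

Lemma dotvB a u v : dotv a (u - v) = dotv a u - dotv a v.
Proof. by rewrite dotvD -scaleN1r dotvZ mulN1r. Qed.

Lemma dotv_sum a m (f : 'I_m -> V) : dotv a (\sum_i f i) = \sum_i dotv a (f i).
Proof.
have dotv0 : dotv a 0 = 0 by rewrite /dotv big1 // => i _; rewrite mxE mulr0.
exact: (big_morph (dotv a) (dotvD a) dotv0).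
Qed.

Lemma dotv_delta k u : dotv (delta_mx 0 k) u = u 0 k.
Proof.
rewrite /dotv (bigD1 k) //= big1 ?addr0; first by rewrite mxE !eqxx mul1r.
by move=> i /negPf ik; rewrite mxE ik andbF mul0r.
Qed.

Lemma dotvDl a a' u : dotv (a + a') u = dotv a u + dotv a' u.
Proof. by rewrite /dotv -big_split; apply: eq_bigr => i _; rewrite mxE mulrDl. Qed.

Lemma dotvZl a u c : dotv (c *: a) u = c * dotv a u.
Proof. by rewrite /dotv mulr_sumr; apply: eq_bigr => i _; rewrite mxE mulrA. Qed.

Lemma conv_weights s z : conv s z ->
  exists c : 'I_(size s) -> R, (forall i, 0 <= c i) /\ \sum_i c i = 1 /\
    forall a b, dotv a z - b = \sum_i c i * (dotv a s`_i - b).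
Proof.
case=> c [c0 [c1 ->]]; exists c; split => //; split => // a b.
rewrite dotv_sum -{1}[b]mul1r -c1 mulr_suml -sumrB.
by apply: eq_bigr => i _; rewrite dotvZ mulrBr.
Qed.

Lemma conv_nth s (i : 'I_(size s)) : conv s s`_i.
Proof.
exists (fun j => (j == i)%:R); split; first by move=> j; rewrite ler0n.
split; first by rewrite (bigD1 i) //= big1 ?addr0 ?eqxx // => j /negPf ->.
rewrite (bigD1 i) //= big1 ?addr0 ?eqxx ?scale1r // => j /negPf ->.
by rewrite scale0r.
Qed.

Lemma conv_le s a b z :
  (forall i : 'I_(size s), dotv a s`_i <= b) -> conv s z -> dotv a z <= b.
Proof.
move=> sab /conv_weights [c [c0 [_ Hc]]]; rewrite -subr_le0 Hc.
by apply: sumr_le0 => i _; rewrite mulr_ge0_le0 // subr_le0.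
Qed.

Lemma weights_tight m (c f : 'I_m -> R) :
  (forall i, 0 <= c i) -> (forall i, f i <= 0) -> \sum_i c i * f i = 0 ->
  forall i, c i * f i = 0.
Proof.
move=> c0 f0 sum0 i; apply/oppr_inj; rewrite oppr0.
apply: (@psumr_eq0P _ _ xpredT (fun i => - (c i * f i))) => //.
  by move=> j _; rewrite oppr_ge0 mulr_ge0_le0.
by rewrite sumrN sum0 oppr0.
Qed.

Lemma conv2P v w z :
  conv [:: v; w] z <-> exists t : R, 0 <= t <= 1 /\ z = v + t *: (w - v).
Proof.
split.
  case=> c [c0 [c1 ->]]; exists (c ord_max); split.
    rewrite c0 /= -c1 big_ord_recr /= lerDr; exact: sumr_ge0.
  move: c1; rewrite !big_ord_recr /= !big_ord0 !add0r => c1.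
  set a0 := c _ in c1 *; set a1 := c _ in c1 *.
  have -> : a0 = 1 - a1 by rewrite -c1 addrK.
  by apply/rowP => k; rewrite !mxE; ring.
case=> t [/andP [t0 t1] ->].
exists (fun i : 'I_2 => if i == ord0 then 1 - t else t); split.
  by case=> [[|[|]]] //= _; rewrite ?subr_ge0.
rewrite !big_ord_recr /= !big_ord0 !add0r; split; first by rewrite subrK.
by apply/rowP => k; rewrite !mxE; ring.
Qed.

Lemma conv2l v w : conv [:: v; w] v.
Proof. by apply/conv2P; exists 0; rewrite lexx ler01 scale0r addr0. Qed.

Lemma conv2r v w : conv [:: v; w] w.
Proof. by apply/conv2P; exists 1; rewrite ler01 lexx scale1r addrC subrK. Qed.

Lemma face_subset P F : face P F -> F `<=` P.
Proof. by case=> a [b [_ ->]] z []. Qed.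

Lemma lin_sub_ker F a b :
  (forall p, F p -> dotv a p = b) -> lin F `<=` [set z | dotv a z = 0].
Proof.
move=> Fab _ [m [c [p [q [Fpq ->]]]]] /=; rewrite dotv_sum big1 // => i _.
by have [Fp Fq] := Fpq i; rewrite dotvZ dotvB !Fab // subrr mulr0.
Qed.

Lemma lin_sum_sub F m (c : 'I_m -> R) (w : 'I_m -> V) v :
  (forall i, F (w i)) -> F v -> lin F (\sum_i c i *: (w i - v)).
Proof. by move=> Fw Fv; exists m, c, w, (fun=> v). Qed.

Lemma Zbasis_unimodular (M : 'M[R]_d) :
  (forall i, int_vec (row i M)) -> Zbasis M -> unimodular M.
Proof.
move=> iM Zb.
have H i : exists c : V, int_vec c /\ delta_mx 0 i = c *m M.
  have [|c [ci [E _]]] := Zb (delta_mx 0 i); last by exists c.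
  by move=> j; rewrite mxE natr_int.
have [f Hf] := choice H.
apply: (@unimodular_left_inv _ _ _ (\matrix_i f i)).
- apply/row_matrixP => i; rewrite row_mul rowK row1.
  by have [_ <-] := Hf i.
- by move=> i j; have := iM i j; rewrite mxE.
- by move=> i j; rewrite mxE; have [fi _] := Hf i; apply: fi.
Qed.

End Hyperplanes.

Section ConvexFaces.
Variables (R : realType) (d : nat).
Local Notation V := 'rV[R]_d.
Implicit Types (a l u v w z : V) (s : seq V) (F G P : set V).

Lemma conv_tight_gen s a b z : (forall i : 'I_(size s), dotv a s`_i <= b) ->
  conv s z -> dotv a z = b -> exists i : 'I_(size s), dotv a s`_i = b.
Proof.
move=> le_b /conv_weights [c [c0 [c1 Hc]]] az.
have f0 (i : 'I_(size s)) : dotv a s`_i - b <= 0 by rewrite subr_le0.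
have := weights_tight c0 f0; rewrite -Hc az subrr => /(_ erefl) tc.
apply: contrapT => noS; suff : \sum_i c i = 0 by rewrite c1 => /eqP; rewrite oner_eq0.
apply: big1 => i _; move/eqP: (tc i); rewrite mulf_eq0 subr_eq0 => /orP [/eqP //| /eqP Si].
by case: noS; exists i.
Qed.

Lemma conv_face_sub s a b a' b' z : (forall i : 'I_(size s), dotv a' s`_i <= b') ->
  (forall i : 'I_(size s), dotv a' s`_i = b' -> dotv a s`_i = b) ->
  conv s z -> dotv a' z = b' -> dotv a z = b.
Proof.
move=> le_b' on_b' /conv_weights [c [c0 [_ Hc]]] a'z.
have f0 (i : 'I_(size s)) : dotv a' s`_i - b' <= 0 by rewrite subr_le0.
have := weights_tight c0 f0; rewrite -Hc a'z subrr => /(_ erefl) tc.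
apply/eqP; rewrite -subr_eq0 Hc; apply/eqP; apply: big1 => i _.
move/eqP: (tc i); rewrite mulf_eq0 subr_eq0 => /orP [/eqP -> | /eqP /on_b' ->].
  by rewrite mul0r.
by rewrite subrr mulr0.
Qed.

(* Tilting the supporting hyperplane of F towards l, by adding l to a large
   multiple of its normal, cuts out the generators of F on which l is maximal. *)
Lemma conv_face_argmax s F l : face (conv s) F -> F !=set0 ->
  exists F', [/\ face (conv s) F', F' !=set0, F' `<=` F &
    forall p q, F p -> F' q -> dotv l p <= dotv l q].
Proof.
case=> a [b [Hab ->]] [z0 [Cz0 /= az0]].
have le_b (i : 'I_(size s)) : dotv a s`_i <= b by apply/Hab/conv_nth.
pose S (i : 'I_(size s)) := dotv a s`_i == b.
have [i0 /eqP Si0] := conv_tight_gen le_b Cz0 az0.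
have [im Sim Hmax] := arg_maxP (fun i : 'I_(size s) => dotv l s`_i) (Si0 : S i0).
set M := dotv l s`_im.
have gap (i : 'I_(size s)) : ~~ S i -> 0 < b - dotv a s`_i.
  by move=> nS; rewrite subr_gt0 lt_neqAle le_b andbT.
have [lam Hlam] : exists lam : R,
    forall i, ~~ S i -> dotv l s`_i - M + 1 <= lam * (b - dotv a s`_i).
  exists (\sum_(i | ~~ S i) `|dotv l s`_i - M + 1| / (b - dotv a s`_i)) => i nS.
  rewrite -ler_pdivrMr ?gap //.
  apply: le_trans (ler_wpM2r _ (ler_norm _)) _; first by rewrite invr_ge0 ltW ?gap.
  rewrite (bigD1 i) //= lerDl; apply: sumr_ge0 => j /andP [nSj _].
  by rewrite divr_ge0 // ltW // gap.
pose a' := lam *: a + l; pose b' := lam * b + M.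
have Ha' z : dotv a' z - b' = lam * (dotv a z - b) + (dotv l z - M).
  by rewrite dotvDl dotvZl /b'; ring.
have le_b' (i : 'I_(size s)) : dotv a' s`_i <= b'.
  rewrite -subr_le0 Ha'; case Si: (S i).
    by have := Hmax i Si; move/eqP: Si => ->; rewrite subrr mulr0 add0r subr_le0.
  by have := Hlam i (negbT Si); lra.
have on_b' (i : 'I_(size s)) : dotv a' s`_i = b' -> dotv a s`_i = b.
  move=> /eqP; rewrite -subr_eq0 Ha' => /eqP E; case Si: (S i); first exact/eqP.
  by have := Hlam i (negbT Si); lra.
exists (conv s `&` [set z | dotv a' z = b']); split.
- by exists a', b'; split => // z; apply: conv_le.
- exists s`_im; split; first exact: conv_nth.
  by apply/eqP; rewrite /= -subr_eq0 Ha' (eqP Sim) !subrr mulr0 addr0.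
- by move=> z [Cz /= a'z]; split => //=; apply: conv_face_sub le_b' on_b' Cz a'z.
move=> p q [Cp /= ap] [Cq /= /eqP a'q]; have aq := conv_face_sub le_b' on_b' Cq (eqP a'q).
move: (conv_le le_b' Cp); rewrite -subr_le0 Ha' ap subrr mulr0 add0r subr_le0.
by move: a'q; rewrite -subr_eq0 Ha' aq subrr mulr0 add0r subr_eq0 => /eqP ->.
Qed.

Lemma face_segment P G v w : face P G -> G !=set0 ->
  G `<=` conv [:: v; w] -> conv [:: v; w] `<=` P ->
  [\/ G = [set v], G = [set w] | G = conv [:: v; w]].
Proof.
case=> a [b [Hab ->]] [z0 Gz0] sG sP.
have Pv := sP _ (conv2l v w); have Pw := sP _ (conv2r v w).
have av : 0 <= b - dotv a v by rewrite subr_ge0; apply: Hab.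
have aw : 0 <= b - dotv a w by rewrite subr_ge0; apply: Hab.
have onG z : (P `&` [set z | dotv a z = b]) z -> exists t, [/\ z = v + t *: (w - v),
    (1 - t) * (b - dotv a v) = 0 & t * (b - dotv a w) = 0].
  move=> Gz; case/conv2P: (sG _ Gz) => t [/andP [t0 t1] Ez]; exists t.
  suff /andP [/eqP -> /eqP ->] :
    ((1 - t) * (b - dotv a v) == 0) && (t * (b - dotv a w) == 0) by [].
  rewrite -paddr_eq0 ?mulr_ge0 // ?subr_ge0 //.
  by case: Gz => _ /= <-; rewrite Ez dotvD dotvZ dotvB; apply/eqP; ring.
have nz c u : dotv a u != b -> c * (b - dotv a u) = 0 -> c = 0.
  by move=> ne /eqP; rewrite mulf_eq0 subr_eq0 [b == _]eq_sym (negPf ne) orbF => /eqP.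
case: (eqVneq (dotv a v) b) => ea; case: (eqVneq (dotv a w) b) => eb.
- apply: Or33; apply/seteqP; split; first exact: sG.
  move=> z Cz; split; first exact: sP.
  by case/conv2P: Cz => t [_ ->] /=; rewrite dotvD dotvZ dotvB ea eb subrr mulr0 addr0.
- apply: Or31; apply/seteqP; split => [z /onG [t [-> _ /nz t0]] | z -> //].
  by rewrite t0 // scale0r addr0.
- apply: Or32; apply/seteqP; split => [z /onG [t [-> /nz t1 _]] | z -> //].
  by rewrite -(subr0_eq (t1 ea)) scale1r addrC subrK.
- case: (onG _ Gz0) => t [_ /nz t1 /nz t0].
  by move: (t1 ea); rewrite t0 // subr0 => /eqP; rewrite oner_eq0.
Qed.

End ConvexFaces.

Section Cube.
Variables (R : realType) (d : nat) (C : set 'rV[R]_d)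
  (L : {set 'I_d} -> {set 'I_d} -> set 'rV[R]_d).
Hypothesis HL : cube_labeling C L.
Local Notation V := 'rV[R]_d.
Implicit Types (I J : {set 'I_d}) (k : 'I_d).

Lemma label_face I J : [disjoint I & J]%bool -> face C (L I J).
Proof. by case: HL => H _ /H []. Qed.

Lemma label_neq0 I J : [disjoint I & J]%bool -> L I J !=set0.
Proof. by case: HL => H _ /H []. Qed.

Lemma label_subset I J (I' J' : {set 'I_d}) :
  [disjoint I & J]%bool -> [disjoint I' & J']%bool ->
  L I J `<=` L I' J' <-> I' \subset I /\ J' \subset J.
Proof. by case: HL => _ [_]; apply. Qed.

Lemma label_surj F : face C F -> F !=set0 ->
  exists I J, [disjoint I & J]%bool /\ F = L I J.
Proof. by case: HL => _ [H _]; apply: H. Qed.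

Lemma label_inj I J (I' J' : {set 'I_d}) :
  [disjoint I & J]%bool -> [disjoint I' & J']%bool ->
  L I J = L I' J' -> I = I' /\ J = J'.
Proof.
move=> dIJ dIJ' E.
have [s1 s2] : I' \subset I /\ J' \subset J by apply/(label_subset dIJ dIJ'); rewrite E.
have [s3 s4] : I \subset I' /\ J \subset J' by apply/(label_subset dIJ' dIJ); rewrite E.
by split; apply/eqP; rewrite finset.eqEsubset ?s1 ?s2 ?s3 ?s4.
Qed.

(* A vertex of the cube is labelled by the set I of coordinates equal to 0. *)
Local Notation vtx I := (L I (~: I)).

Lemma disjointC I : [disjoint I & ~: I]%bool.
Proof. by rewrite finset.disjoints_subset finset.setCK. Qed.

Lemma disjoint_vtx I (I' J' : {set 'I_d}) :
  I' \subset I -> J' \subset ~: I -> [disjoint I' & J']%bool.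
Proof.
move=> sI sJ; rewrite finset.disjoints_subset; apply: fintype.subset_trans sI _.
by rewrite -finset.setCS finset.setCK.
Qed.

Lemma vtx_minimal I (I' J' : {set 'I_d}) : [disjoint I' & J']%bool ->
  I \subset I' -> ~: I \subset J' -> I' = I /\ J' = ~: I.
Proof.
move=> dIJ sI sJ.
have in_I j : (j \in I') = (j \in I).
  apply/idP/idP => [jI'|/(fintype.subsetP sI)//]; apply: contraT => jI.
  by rewrite -(disjointFr dIJ jI') (fintype.subsetP sJ) // inE.
have eI : I' = I by apply/setP => j; rewrite in_I.
split => //; apply/setP => j; apply/idP/idP => [jJ | /(fintype.subsetP sJ) //].
by rewrite inE -in_I (disjointFl dIJ jJ).
Qed.

Hypothesis Csm : smooth C.

Lemma vtx_singleton I : exists v, vtx I = [set v].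
Proof.
have [s [_ Cs]] := Csm.1; have dI := disjointC I.
have key (l : V) p q : vtx I p -> vtx I q -> dotv l p <= dotv l q.
  move=> Vp Vq; have := label_face dI; rewrite Cs => fF.
  have [F' [fF' neF' sF' maxF']] := conv_face_argmax l fF (label_neq0 dI).
  rewrite -Cs in fF'; have [I' [J' [dIJ' EF']]] := label_surj fF' neF'.
  have [sI sJ] : I \subset I' /\ ~: I \subset J'.
    by apply/(label_subset dIJ' dI); rewrite -EF'.
  have [eI eJ] := vtx_minimal dIJ' sI sJ.
  by apply: maxF' => //; rewrite EF' eI eJ.
have [v Vv] := label_neq0 dI; exists v; apply/seteqP; split => [z Vz|z -> //].
by apply/rowP => k; apply/le_anti; rewrite -!dotv_delta !key.
Qed.

Definition vpt I : V := xget 0 (vtx I).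

Lemma vtxE I : vtx I = [set vpt I].
Proof.
have [v Vv] := vtx_singleton I; rewrite /vpt Vv; congr [set _].
by apply/esym; apply: (@xgetPex _ 0 [set v]); exists v.
Qed.

Lemma vpt_label I (I' J' : {set 'I_d}) : [disjoint I' & J']%bool ->
  L I' J' (vpt I) <-> I' \subset I /\ J' \subset ~: I.
Proof.
move=> dIJ'; rewrite -(label_subset (disjointC I) dIJ') vtxE.
by split => [Lv z -> // | /(_ (vpt I) erefl)].
Qed.

Lemma vpt_inj : injective vpt.
Proof.
move=> I I' E; have := vtxE I'; rewrite -E -vtxE.
by case/(label_inj (disjointC I') (disjointC I)).
Qed.

Lemma vpt_segment I v w : vtx I `<=` conv [:: v; w] -> conv [:: v; w] `<=` C ->
  v <> w -> vpt I = v \/ vpt I = w.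
Proof.
move=> sV sC vw; have dI := disjointC I.
case: (face_segment (label_face dI) (label_neq0 dI) sV sC); rewrite vtxE.
- by move/(congr1 (@^~ (vpt I))) => /= <-; left.
- by move/(congr1 (@^~ (vpt I))) => /= <-; right.
move=> E; case: vw; have := conv2l v w; have := conv2r v w; rewrite -E.
by move=> -> ->.
Qed.

Definition flip I k := if k \in I then I :\ k else k |: I.

Lemma in_flip I k j : (j \in flip I k) = (j \in I) (+) (j == k).
Proof.
by rewrite /flip; case: ifP => kI; rewrite !inE; case: eqP => [->|_];
  rewrite ?kI ?addbT ?addbF.
Qed.

Lemma flip_neq I k : flip I k != I.
Proof. by apply/negP => /eqP/setP/(_ k); rewrite in_flip eqxx addbT; case: (k \in I). Qed.

Lemma pigeonhole_pair (T : Type) (v w a b c : T) :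
  a = v \/ a = w -> b = v \/ b = w -> c = v \/ c = w -> [\/ a = b, a = c | b = c].
Proof. by do 3![case=> ->]; first [exact: Or31 | exact: Or32 | exact: Or33]. Qed.

Lemma segment_label_free I J v w : [disjoint I & J]%bool ->
  L I J = conv [:: v; w] -> v <> w ->
  exists k, [/\ k \notin I, k \notin J & forall j, j != k -> (j \in I) || (j \in J)].
Proof.
move=> dIJ E vw.
have sC : conv [:: v; w] `<=` C by rewrite -E; apply: face_subset; exact: label_face.
have end_pt (A : {set 'I_d}) : A \subset ~: J -> vpt (A :|: I) = v \/ vpt (A :|: I) = w.
  move=> sA; apply: vpt_segment => //; rewrite -E.
  apply/(label_subset (disjointC _) dIJ); rewrite finset.subsetUr; split => //.
  apply/fintype.subsetP => j jJ; rewrite !inE negb_or (disjointFl dIJ jJ) andbT.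
  by apply: contraL jJ => /(fintype.subsetP sA); rewrite inE.
have [[k [kI kJ]] | all_in] := pselect (exists k, k \notin I /\ k \notin J).
  exists k; split => // j jk; apply: contraT; rewrite negb_or => /andP [jI jJ]; exfalso.
  (* Otherwise I, k |: I and j |: I label three distinct vertices on the segment. *)
  have sJ (A : {set 'I_d}) : A \subset [set k; j]%SET -> A \subset ~: J.
    move=> sA; apply: fintype.subset_trans sA _; apply/fintype.subsetP => i.
    by rewrite !inE => /orP [] /eqP ->.
  have sk : [set k]%SET \subset [set k; j]%SET by rewrite finset.sub1set !inE eqxx.
  have sj : [set j]%SET \subset [set k; j]%SET by rewrite finset.sub1set !inE eqxx orbT.
  have := end_pt _ (sJ _ (finset.sub0set _)).
  have := end_pt _ (sJ _ sk); have := end_pt _ (sJ _ sj); rewrite finset.set0U.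
  have neq (A B : {set 'I_d}) i : i \in A -> i \notin B -> vpt A <> vpt B.
    by move=> iA iB /vpt_inj eAB; move: iA; rewrite eAB (negPf iB).
  have kj : k \notin j |: I by rewrite !inE negb_or eq_sym jk.
  move=> hj hk h0; case: (pigeonhole_pair hj hk h0); last 2 first.
  - by apply: (neq _ _ j); rewrite ?inE ?eqxx.
  - by apply: (neq _ _ k); rewrite ?inE ?eqxx.
  by move/esym; apply: (neq _ _ k) => //; rewrite !inE eqxx.
have JE : J = ~: I.
  apply/setP => j; rewrite inE; apply/idP/idP => [jJ|jI].
    by rewrite (disjointFl dIJ jJ).
  by apply: contraT => jJ; case: all_in; exists j.
by case: vw; have := conv2l v w; have := conv2r v w; rewrite -E JE vtxE => -> ->.
Qed.

Lemma disjoint_edge I k : [disjoint I :\ k & ~: I :\ k]%bool.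
Proof. by apply: disjoint_vtx; apply: finset.subD1set. Qed.

Lemma edge_label I e : edge C e -> e (vpt I) -> exists k, e = L (I :\ k) (~: I :\ k).
Proof.
case=> fe [v [w [vw Ee]]] eI.
have [I0 [J0 [d0 E0]]] := label_surj fe (ex_intro _ _ eI).
have [sI sJ] : I0 \subset I /\ J0 \subset ~: I by apply/(vpt_label _ d0); rewrite -E0.
have [k [kI kJ cov]] := segment_label_free d0 (etrans (esym E0) Ee) vw.
exists k; rewrite E0; congr L; apply/setP => j; rewrite !inE.
all: case: (eqVneq j k) => [-> | /cov /orP [jI | jJ]] /=;
  rewrite ?(negPf kI) ?(negPf kJ) //.
- by rewrite jI (fintype.subsetP sI).
- by rewrite (disjointFl d0 jJ); have := fintype.subsetP sJ _ jJ; rewrite inE => /negPf.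
- by rewrite (disjointFr d0 jI) (fintype.subsetP sI).
- by rewrite jJ; have := fintype.subsetP sJ _ jJ; rewrite inE.
Qed.

Lemma edge_other_end I k w :
  L (I :\ k) (~: I :\ k) = conv [:: vpt I; w] -> w <> vpt I -> w = vpt (flip I k).
Proof.
move=> E wv.
have sC : conv [:: vpt I; w] `<=` C.
  by rewrite -E; apply: face_subset; apply: label_face (disjoint_edge I k).
have sV : vtx (flip I k) `<=` conv [:: vpt I; w].
  rewrite -E; apply/(label_subset (disjointC _) (disjoint_edge I k)).
  by split; apply/fintype.subsetP => j; rewrite !inE in_flip => /andP [/negPf -> ?];
    rewrite addbF.
case: (vpt_segment sV sC (nesym wv)) => [/vpt_inj/eqP | //].
by rewrite (negPf (flip_neq I k)).
Qed.

Definition edge_mx I : 'M[R]_d :=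
  xget 0 [set M | unimodular M /\ exists t : 'I_d -> R,
    forall k, 0 < t k /\ row k M = t k *: (vpt (flip I k) - vpt I)].

Lemma edge_mxP I : unimodular (edge_mx I) /\ exists t : 'I_d -> R,
  forall k, 0 < t k /\ row k (edge_mx I) = t k *: (vpt (flip I k) - vpt I).
Proof.
rewrite /edge_mx; case: xgetP => [M _ //|none]; exfalso.
have vI : vertex C (vpt I) by rewrite /vertex -vtxE; apply: label_face (disjointC I).
have [e [M [einj [He [_ Zb]]]]] := Csm.2.2 _ vI.
have H i : exists kt : 'I_d * R, e i = L (I :\ kt.1) (~: I :\ kt.1) /\
    0 < kt.2 /\ row i M = kt.2 *: (vpt (flip I kt.1) - vpt I).
  have [eE [ev [w [wv [Ew [_ [t [t0 [Et _]]]]]]]]] := He i.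
  have [k Ek] := edge_label eE ev.
  by exists (k, t); rewrite Et -(edge_other_end (etrans (esym Ek) Ew) wv).
have [f Hf] := choice H.
have finj : injective (fun i => (f i).1).
  move=> i j /= fij; apply: einj.
  by have [-> _] := Hf i; have [-> _] := Hf j; rewrite fij.
have [g fg gf] := injF_bij finj.
apply: (none (rowsub g M)); split.
  apply: unimodular_rowsub (can_inj gf) _; apply: Zbasis_unimodular Zb => i.
  by have [_ [_ [w [_ [_ [iM _]]]]]] := He i.
exists (fun k => (f (g k)).2) => k; rewrite row_rowsub.
by have [_ [t0 ->]] := Hf (g k); rewrite gf.
Qed.

Lemma vpt_mem I : C (vpt I).
Proof. by apply: (face_subset (label_face (disjointC I))); rewrite vtxE. Qed.

Definition coord I (z : V) k := (z *m invmx (edge_mx I)) 0 k.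

Lemma coord_expansion I (z : V) : z = \sum_k coord I z k *: row k (edge_mx I).
Proof. by have [[uM _ _] _] := edge_mxP I; rewrite /coord -mulmx_sum_row mulmxKV. Qed.

Lemma coord_edge I j k : coord I (row j (edge_mx I)) k = (j == k)%:R.
Proof. by have [[uM _ _] _] := edge_mxP I; rewrite /coord coord_row. Qed.

(* F_k or F_{\bar k}: the facet through vpt I that misses vpt (flip I k). *)
Definition vfacet I k :=
  if k \in I then L [set k]%SET finset.set0 else L finset.set0 [set k]%SET.

Lemma disjoint_vfacet k :
  [disjoint [set k]%SET & finset.set0]%bool /\ [disjoint finset.set0 & [set k]%SET]%bool.
Proof.
by split; rewrite finset.disjoints_subset; apply/fintype.subsetP => j; rewrite !inE.
Qed.

Lemma vfacet_face I k : face C (vfacet I k).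
Proof.
by have [d1 d2] := disjoint_vfacet k; rewrite /vfacet; case: ifP => _; apply: label_face.
Qed.

Lemma label_sub_vfacet I k (I' J' : {set 'I_d}) : I' \subset I -> J' \subset ~: I ->
  k \in I' :|: J' -> L I' J' `<=` vfacet I k.
Proof.
move=> sI sJ kIJ; have dIJ := disjoint_vtx sI sJ; have [d1 d2] := disjoint_vfacet k.
move: kIJ; rewrite /vfacet inE; case: ifP => kI /orP kIJ; apply/label_subset => //;
  rewrite finset.sub1set finset.sub0set; split => //; case: kIJ => // k_in.
  by have := fintype.subsetP sJ _ k_in; rewrite inE kI.
by have := fintype.subsetP sI _ k_in; rewrite kI.
Qed.

Lemma vpt_vfacet I J k : vfacet I k (vpt J) <-> (k \in J) = (k \in I).
Proof.
have [d1 d2] := disjoint_vfacet k.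
rewrite /vfacet; case: ifP => kI; rewrite vpt_label // finset.sub1set finset.sub0set.
  by split => [[-> _] | ->].
by rewrite inE; split => [[_ /negPf] | ->].
Qed.

Section VertexFacet.
Variables (I : {set 'I_d}) (k : 'I_d) (a : V) (b : R).
Hypotheses (Cab : forall z, C z -> dotv a z <= b)
  (Eab : vfacet I k = C `&` [set z | dotv a z = b]).

Lemma vpt_on_vfacet J : (k \in J) = (k \in I) -> dotv a (vpt J) = b.
Proof. by move/vpt_vfacet; rewrite Eab => -[]. Qed.

Lemma vpt_off_vfacet J : (k \in J) != (k \in I) -> dotv a (vpt J) < b.
Proof.
move=> kJ; rewrite lt_def Cab ?andbT; last exact: vpt_mem.
apply/eqP => E.
have /vpt_vfacet : vfacet I k (vpt J) by rewrite Eab; split; [apply: vpt_mem|].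
by apply/eqP.
Qed.

Lemma vfacet_normal :
  dotv a (row k (edge_mx I)) < 0 /\
  forall z, dotv a z = coord I z k * dotv a (row k (edge_mx I)).
Proof.
have [_ [t Ht]] := edge_mxP I.
have arow j : dotv a (row j (edge_mx I)) = t j * (dotv a (vpt (flip I j)) - b).
  by have [_ ->] := Ht j; rewrite dotvZ dotvB (vpt_on_vfacet (erefl _)).
split.
  rewrite arow pmulr_rlt0 ?subr_lt0; last by have [] := Ht k.
  by apply: vpt_off_vfacet; rewrite in_flip eqxx addbT; case: (k \in I).
move=> z; rewrite {1}(coord_expansion I z) dotv_sum (bigD1 k) //= big1 ?addr0 ?dotvZ //.
move=> j jk; rewrite dotvZ arow vpt_on_vfacet ?subrr ?mulr0 ?mul0r //.
by rewrite in_flip eq_sym (negPf jk) addbF.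
Qed.

End VertexFacet.

Lemma lin_label I (I' J' : {set 'I_d}) : I' \subset I -> J' \subset ~: I ->
  lin (L I' J') = [set z | forall k, k \in I' :|: J' -> coord I z k = 0].
Proof.
move=> sI sJ; have dIJ := disjoint_vtx sI sJ.
apply/seteqP; split => z.
  move=> linz k kIJ; have [a [b [Cab Eab]]] := vfacet_face I k.
  have [neg Hz] := vfacet_normal Cab Eab.
  have : dotv a z = 0.
    apply: (lin_sub_ker (b := b)) linz => p /(label_sub_vfacet sI sJ kIJ).
    by rewrite Eab => -[].
  by rewrite Hz => /eqP; rewrite mulf_eq0 (negPf (ltr0_neq0 neg)) orbF => /eqP.
move=> /= Hz; have [_ [t Ht]] := edge_mxP I.
pose w k := if k \in I' :|: J' then vpt I else vpt (flip I k).
have -> : z = \sum_k (coord I z k * t k) *: (w k - vpt I).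
  rewrite {1}(coord_expansion I z); apply: eq_bigr => k _; rewrite /w.
  case: ifP => kIJ; first by rewrite Hz // subrr scaler0 scale0r.
  by have [_ ->] := Ht k; rewrite scalerA.
apply: lin_sum_sub => [k|]; last exact/vpt_label.
rewrite /w; case: ifP => kIJ; apply/vpt_label => //.
move: kIJ; rewrite inE => /norP [kI' kJ'].
split; apply/fintype.subsetP => j jIJ; rewrite ?inE in_flip.
  by rewrite (fintype.subsetP sI) //; case: eqP jIJ => // ->; rewrite (negPf kI').
have := fintype.subsetP sJ _ jIJ; rewrite inE => /negPf ->.
by case: eqP jIJ => // ->; rewrite (negPf kJ').
Qed.

Lemma lin_vfacet I k a b :
  (forall z, C z -> dotv a z <= b) -> vfacet I k = C `&` [set z | dotv a z = b] ->
  lin (vfacet I k) = [set z | dotv a z = 0].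
Proof.
move=> Cab Eab; have [neg Ha] := vfacet_normal Cab Eab.
have -> : lin (vfacet I k) = [set z | coord I z k = 0].
  rewrite /vfacet; case: ifP => kI;
    rewrite (@lin_label I) ?finset.sub0set ?finset.sub1set ?inE ?kI //;
    apply/seteqP; split => z /= H;
    by [apply: H; rewrite !inE eqxx ?orbT | move=> j; rewrite !inE /= ?orbF => /eqP ->].
apply/seteqP; split => z /=; rewrite Ha; first by move=> ->; rewrite mul0r.
by move/eqP; rewrite mulf_eq0 (negPf (ltr0_neq0 neg)) orbF => /eqP.
Qed.

Lemma coordZ I c (z : V) k : coord I (c *: z) k = c * coord I z k.
Proof. by rewrite /coord -scalemxAl mxE. Qed.

Lemma coordB I (u v : V) k : coord I (u - v) k = coord I u k - coord I v k.
Proof. by rewrite /coord mulmxDl mulNmx !mxE. Qed.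

Lemma coord_mxE I (N : 'M[R]_d) j k : (N *m invmx (edge_mx I)) j k = coord I (row j N) k.
Proof. by rewrite /coord !mxE; apply: eq_bigr => i _; rewrite mxE. Qed.

Lemma int_coord_edge I J j k : coord I (row j (edge_mx J)) k \is a Num.int.
Proof.
have [[_ _ iV] _] := edge_mxP I; have [[_ iM _] _] := edge_mxP J.
by rewrite -coord_mxE; apply: int_mxM.
Qed.

Lemma edge_in_lin I k (I' J' : {set 'I_d}) : I' \subset I -> J' \subset ~: I ->
  k \notin I' :|: J' -> lin (L I' J') (row k (edge_mx I)).
Proof.
move=> sI sJ kIJ; rewrite (lin_label sI sJ) => j jIJ; rewrite coord_edge.
by case: eqP kIJ => // ->; rewrite jIJ.
Qed.

Lemma dotv_coord2 I (x y : 'I_d) a : x != y ->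
  (forall k, k != x -> k != y -> dotv a (row k (edge_mx I)) = 0) ->
  forall z, dotv a z = coord I z x * dotv a (row x (edge_mx I)) +
                       coord I z y * dotv a (row y (edge_mx I)).
Proof.
move=> xy a0 z; rewrite {1}(coord_expansion I z) dotv_sum (bigD1 x) //= (bigD1 y) /=;
  last by rewrite eq_sym.
by rewrite big1 ?addr0 ?dotvZ ?addrA // => k /andP [ky kx]; rewrite dotvZ a0 ?mulr0.
Qed.

Section FacetPair.
Variables (x y : 'I_d).
Hypothesis xy : x != y.
Local Notation T := [set: 'I_d]%SET.
Local Notation Fxy := (L [set x; y]%SET finset.set0).

Lemma lin_Fxy : lin Fxy = [set z | coord T z x = 0 /\ coord T z y = 0].
Proof.
rewrite (@lin_label T) ?finset.subsetT ?finset.sub0set //.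
apply/seteqP; split => z /= H; first by split; apply: H; rewrite !inE eqxx ?orbT.
by move=> k; rewrite !inE orbF => /orP [] /eqP ->; case: H.
Qed.

Lemma coord_parallel_xy I (I' J' : {set 'I_d}) k : parallel Fxy (L I' J') ->
  I' \subset I -> J' \subset ~: I -> k \notin I' :|: J' ->
  coord T (row k (edge_mx I)) x = 0 /\ coord T (row k (edge_mx I)) y = 0.
Proof.
by move=> par sI sJ kIJ; have := edge_in_lin sI sJ kIJ; rewrite -par lin_Fxy.
Qed.

Lemma flipT : flip T x = T :\ x.
Proof. by rewrite /flip finset.in_setT. Qed.

Lemma flipTxx : flip (T :\ x) x = T.
Proof. by apply/setP => j; rewrite in_flip !inE; case: eqP. Qed.

Lemma flipTxy : flip (T :\ x) y = T :\ x :\ y.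
Proof. by rewrite /flip !inE eq_sym xy. Qed.

Lemma flipTxyy : flip (T :\ x :\ y) y = T :\ x.
Proof.
apply/setP => j; rewrite in_flip !inE andbT.
by case: (eqVneq j y) => [->|jy]; rewrite ?eqxx ?addbF // [y == x]eq_sym xy.
Qed.

Lemma edge_coord_y : parallel Fxy (L [set y]%SET [set x]%SET) ->
  coord T (row y (edge_mx (T :\ x))) y = 1.
Proof.
move=> par.
set M1 := edge_mx T; set M2 := edge_mx (T :\ x); set p := row y M2.
have [uM1 [t1 Ht1]] := edge_mxP T; have [uM2 [t2 Ht2]] := edge_mxP (T :\ x).
have sI : [set y]%SET \subset T :\ x by rewrite finset.sub1set !inE eq_sym xy.
have sJ : [set x]%SET \subset ~: (T :\ x) by rewrite finset.sub1set !inE eqxx.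
have others k : k != x -> k != y ->
    (M2 *m invmx M1) k x = 0 /\ (M2 *m invmx M1) k y = 0.
  move=> kx ky; rewrite !coord_mxE; apply: (coord_parallel_xy par sI sJ).
  by rewrite !inE negb_or ky kx.
have Kxy : (M2 *m invmx M1) x y = 0.
  have [t1x E1] := Ht1 x; have := coord_edge T x y.
  rewrite -/M1 E1 (negPf xy) flipT coordZ coordB => /eqP.
  rewrite mulf_eq0 (gt_eqF t1x) /= subr_eq0 => /eqP e.
  by rewrite coord_mxE; have [_ ->] := Ht2 x; rewrite flipTxx coordZ coordB e subrr mulr0.
have intK : int_mx (M2 *m invmx M1) by move=> i j; rewrite coord_mxE int_coord_edge.
have := unimodular_minor uM1 uM2 xy xy others; rewrite /= Kxy mul0r subr0.
move/(norm_intM_eq1 (intK x x) (intK y y)); rewrite coord_mxE -/p => py1.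
have [a [b [Cab Eab]]] := vfacet_face T y; have [neg Ha] := vfacet_normal Cab Eab.
have : dotv a p < 0.
  rewrite /p /M2; have [t0 ->] := Ht2 y; rewrite dotvZ dotvB pmulr_rlt0 // subr_lt0 flipTxy.
  rewrite (vpt_on_vfacet Eab (J := T :\ x)) ?(vpt_off_vfacet Cab Eab) // !inE.
    by rewrite eqxx.
  by rewrite [y == x]eq_sym xy.
by rewrite Ha nmulr_llt0 // => /gtr0_norm <-.
Qed.

Lemma bar_facet_normal : parallel Fxy (L [set y]%SET [set x]%SET) ->
  let p := row y (edge_mx (T :\ x)) in
  exists a b A, [/\ 0 < A, forall z, C z -> dotv a z <= b,
    L finset.set0 [set x]%SET = C `&` [set z | dotv a z = b] &
    forall z, dotv a z = A * (coord T z x - coord T p x * coord T z y)].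
Proof.
move=> par p; set M1 := edge_mx T.
have [a [b [Cab Eab]]] := vfacet_face (T :\ x) x.
have sI : [set y]%SET \subset T :\ x by rewrite finset.sub1set !inE eq_sym xy.
have sJ : [set x]%SET \subset ~: (T :\ x) by rewrite finset.sub1set !inE eqxx.
have a0 k : k != x -> k != y -> dotv a (row k M1) = 0.
  move=> kx ky; have : lin Fxy (row k M1).
    apply: edge_in_lin; rewrite ?finset.subsetT ?finset.sub0set //.
    by rewrite !inE orbF negb_or kx ky.
  rewrite par; apply: (lin_sub_ker (b := b)) => q /(label_sub_vfacet (k := x) sI sJ).
  by rewrite !inE eqxx orbT Eab => /(_ erefl) [].
have Ha := dotv_coord2 xy a0.
have A_pos : 0 < dotv a (row x M1).
  have [_ [t1 Ht1]] := edge_mxP T; have [t0 ->] := Ht1 x.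
  rewrite dotvZ dotvB flipT (vpt_on_vfacet Eab (J := T :\ x)) // pmulr_rgt0 // subr_gt0.
  by rewrite (vpt_off_vfacet Cab Eab) // !inE eqxx.
have ap : dotv a p = 0.
  have [_ [t2 Ht2]] := edge_mxP (T :\ x); rewrite /p; have [_ ->] := Ht2 y.
  by rewrite dotvZ dotvB flipTxy !(vpt_on_vfacet Eab) ?subrr ?mulr0 // !inE eqxx ?andbF.
exists a, b, (dotv a (row x M1)); split => // [|z].
  by rewrite -Eab /vfacet !inE eqxx.
rewrite [LHS]Ha; move: ap; rewrite [LHS]Ha /p (edge_coord_y par) mul1r.
by move/eqP; rewrite addr_eq0 eq_sym eqr_oppLR => /eqP ->; ring.
Qed.

Lemma bar_facet_parallel : parallel Fxy (L [set y]%SET [set x]%SET) ->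
  coord T (row y (edge_mx (T :\ x))) x = 0 ->
  parallel (L [set x]%SET finset.set0) (L finset.set0 [set x]%SET).
Proof.
move=> par p0; have [a [b [A [A0 Cab Eab Ha]]]] := bar_facet_normal par.
have vfx : vfacet (T :\ x) x = L finset.set0 [set x]%SET by rewrite /vfacet !inE eqxx.
rewrite /parallel -vfx (lin_vfacet Cab) ?vfx //.
rewrite (@lin_label T) ?finset.subsetT ?finset.sub0set //.
apply/seteqP; split => z /= H.
  by rewrite Ha p0 mul0r subr0 H ?mulr0 // !inE eqxx.
move=> k; rewrite !inE orbF => /eqP ->.
by move: H; rewrite Ha p0 mul0r subr0 => /eqP; rewrite mulf_eq0 (gt_eqF A0) => /eqP.
Qed.

End FacetPair.

Lemma setD1C (A : {set 'I_d}) i j : A :\ i :\ j = A :\ j :\ i.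
Proof. by rewrite !finset.setDDl finset.setUC. Qed.

Section Square.
Variables (x y : 'I_d).
Hypothesis xy : x != y.
Local Notation T := [set: 'I_d]%SET.
Let yx : y != x. Proof. by rewrite eq_sym. Qed.
Let p := row y (edge_mx (T :\ x)).
Let q := row x (edge_mx (T :\ y)).
Hypotheses (Hyx : parallel (L [set x; y]%SET finset.set0) (L [set y]%SET [set x]%SET))
  (Hxy : parallel (L [set y; x]%SET finset.set0) (L [set x]%SET [set y]%SET))
  (Hbar : parallel (L [set x; y]%SET finset.set0) (L finset.set0 [set x; y]%SET)).

Lemma square_edges : exists rho rho' : R,
  row y (edge_mx (T :\ x :\ y)) = rho *: p /\ row x (edge_mx (T :\ x :\ y)) = rho' *: q.
Proof.
have [_ [t4 Ht4]] := edge_mxP (T :\ x :\ y).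
have [_ [t2 Ht2]] := edge_mxP (T :\ x); have [_ [t3 Ht3]] := edge_mxP (T :\ y).
have [t4y Ey] := Ht4 y; have [t4x Ex] := Ht4 x.
have [t2y Ep] := Ht2 y; have [t3x Eq] := Ht3 x.
exists (- (t4 y / t2 y)), (- (t4 x / t3 x)); rewrite /p /q Ey Ex Ep Eq !scalerA.
rewrite flipTxyy // setD1C flipTxyy // flipTxy // flipTxy // setD1C.
by rewrite !mulNr !divfK ?gt_eqF // !scaleNr -!scalerN !opprB.
Qed.

Lemma square_minor : `|1 - coord T p x * coord T q y| = 1.
Proof.
have [rho [rho' [Er Er']]] := square_edges.
set M1 := edge_mx T; set M4 := edge_mx (T :\ x :\ y).
have [uM1 _] := edge_mxP T; have [uM4 _] := edge_mxP (T :\ x :\ y).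
have sJ : [set x; y]%SET \subset ~: (T :\ x :\ y).
  by apply/fintype.subsetP => j; rewrite !inE => /orP [] /eqP ->; rewrite eqxx ?andbF.
have others k : k != x -> k != y ->
    (M4 *m invmx M1) k x = 0 /\ (M4 *m invmx M1) k y = 0.
  move=> kx ky; rewrite !coord_mxE; apply: (coord_parallel_xy Hbar (finset.sub0set _) sJ).
  by rewrite !inE /= (negPf kx) (negPf ky).
have intK : int_mx (M4 *m invmx M1) by move=> i j; rewrite coord_mxE int_coord_edge.
have := unimodular_minor uM1 uM4 xy xy others; have Kxx := intK x x; have Kyy := intK y y.
rewrite /= !coord_mxE Er Er' !coordZ /p /q in Kxx Kyy *.
rewrite (edge_coord_y xy Hyx) (edge_coord_y yx Hxy) in Kxx Kyy *.
rewrite !mulr1 (_ : _ - _ = (rho' * rho) * (1 - coord T p x * coord T q y)) in Kxx Kyy *;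
  last by rewrite /p /q; ring.
by rewrite /p /q; apply: norm_intM_eq1; rewrite ?rpredB ?rpredM ?rpred1 ?int_coord_edge.
Qed.

Lemma square_orientation : 0 < 1 - coord T p x * coord T q y.
Proof.
have [a [b [A [A0 Cab Eab Ha]]]] := bar_facet_normal xy Hyx.
have Eab' : vfacet (T :\ x) x = C `&` [set z | dotv a z = b] by rewrite /vfacet !inE eqxx.
have [_ [t3 Ht3]] := edge_mxP (T :\ y); have [t3x Eq] := Ht3 x.
(* The facet F_{\bar x} contains v4 but not v3. *)
have : 0 < dotv a q.
  rewrite /q Eq dotvZ dotvB pmulr_rgt0 // subr_gt0 flipTxy // setD1C.
  rewrite (vpt_on_vfacet Eab' (J := T :\ x :\ y)) ?inE ?eqxx ?andbF //.
  by apply: (vpt_off_vfacet Cab Eab'); rewrite !inE eqxx xy.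
by rewrite Ha /p /q (edge_coord_y yx Hxy) pmulr_rgt0.
Qed.

Lemma square_coords : coord T p x * coord T q y = 0.
Proof. by have := square_minor; rewrite gtr0_norm ?square_orientation //; lra. Qed.

End Square.

End Cube.

Local Close Scope classical_set_scope.

Theorem lemma3p6 (R : realType) (d : nat) (C : set 'rV[R]_d)
  (L : {set 'I_d} -> {set 'I_d} -> set 'rV[R]_d) (x y : 'I_d) :
  (3 <= d)%N ->
  smooth C ->
  cube_labeling C L ->
  (forall (k : nat) (P : set 'rV[R]_k), (0 < k)%N -> (k < d)%N ->
     smooth P -> comb_cube P ->
     exists F G, facet P F /\ facet P G /\ F <> G /\ parallel F G) ->
  x != y ->
  parallel (L [set x; y] finset.set0) (L [set x] [set y]) ->
  parallel (L [set x; y] finset.set0) (L [set y] [set x]) ->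
  parallel (L [set x; y] finset.set0) (L finset.set0 [set x; y]) ->
  parallel (L [set x] finset.set0) (L finset.set0 [set x]) \/
  parallel (L [set y] finset.set0) (L finset.set0 [set y]).
Proof.
move=> _ Csm HL _ xy Hxy Hyx Hbar.
have Hxy' : parallel (L [set y; x] finset.set0) (L [set x] [set y]) by rewrite finset.setUC.
have /eqP := square_coords HL Csm xy Hyx Hxy' Hbar.
rewrite mulf_eq0 => /orP [/eqP px0 | /eqP qy0].
  by left; apply: (bar_facet_parallel HL Csm xy Hyx px0).
by right; apply: (bar_facet_parallel HL Csm _ Hxy' qy0); rewrite eq_sym.
Qed.
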